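(* Let $a>0$. Then the function $$[0,1]\ni x\mapsto\bigl[\sinh(a)\cos(a)+\cosh(a)\sin(a)\bigr]\cosh(ax)\cos(ax)-\bigl[\sinh(a)\cos(a)-\cosh(a)\sin(a)\bigr]\sinh(ax)\sin(ax)$$ attains its maximum on $[0,1]$ at $x=1$. *)

From Stdlib Require Import Reals.
Open Scope R_scope.

Definition fC4 (a x : R) : R :=
  (sinh a * cos a + cosh a * sin a) * cosh (a * x) * cos (a * x)
  - (sinh a * cos a - cosh a * sin a) * sinh (a * x) * sin (a * x).

(** With u = a(1 + x) and v = a(1 - x), the addition formulas turn
    2 (f(1) - f(x)) into (sinh u - sin u)(cosh v - cos v) + (cosh u - cos u)(sinh v - sin v).
    For 0 <= x <= 1 both u and v are nonnegative, and every factor is then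
    nonnegative: cosh >= 1 >= cos everywhere, and sinh - sin vanishes at 0 and
    has derivative cosh - cos >= 0. *)
From Stdlib Require Import Reals Lra Nsatz.
Open Scope R_scope.

Lemma sinh_plus x y : sinh (x + y) = sinh x * cosh y + cosh x * sinh y.
Proof. unfold sinh, cosh; rewrite Ropp_plus_distr, !exp_plus; field. Qed.

Lemma cosh_plus x y : cosh (x + y) = cosh x * cosh y + sinh x * sinh y.
Proof. unfold sinh, cosh; rewrite Ropp_plus_distr, !exp_plus; field. Qed.

Lemma sinh_minus x y : sinh (x - y) = sinh x * cosh y - cosh x * sinh y.
Proof.
  unfold Rminus, sinh, cosh.
  rewrite Ropp_plus_distr, Ropp_involutive, !exp_plus; field.
Qed.

Lemma cosh_minus x y : cosh (x - y) = cosh x * cosh y - sinh x * sinh y.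
Proof.
  unfold Rminus, sinh, cosh.
  rewrite Ropp_plus_distr, Ropp_involutive, !exp_plus; field.
Qed.

Lemma cosh2_sinh2 x : cosh x * cosh x = 1 + sinh x * sinh x.
Proof.
  unfold cosh, sinh; rewrite exp_Ropp.
  field; apply Rgt_not_eq, exp_pos.
Qed.

Lemma cosh_ge_1 x : 1 <= cosh x.
Proof.
  pose proof (cosh2_sinh2 x) as Hsq.
  assert (Hpos : 0 < cosh x) by (unfold cosh; pose proof (exp_pos x);
                                 pose proof (exp_pos (- x)); lra).
  nra.
Qed.

Lemma cos_le_cosh x : cos x <= cosh x.
Proof. pose proof (cosh_ge_1 x); pose proof (COS_bound x); lra. Qed.

Lemma sin_le_sinh x : 0 <= x -> sin x <= sinh x.
Proof.
  intros Hx.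
  set (f y := sinh y - sin y).
  assert (pr : derivable f) by
    (apply derivable_minus; [apply derivable_sinh | apply derivable_sin]).
  assert (Hf : increasing f).
  { apply (nonneg_derivative_1 f pr); intro y.
    assert (Hd : derivable_pt_lim f y (cosh y - cos y)).
    { apply derivable_pt_lim_minus;
        [apply derivable_pt_lim_sinh | apply derivable_pt_lim_sin]. }
    rewrite (derive_pt_eq_0 f y _ (pr y) Hd).
    pose proof (cos_le_cosh y); lra. }
  specialize (Hf 0 x Hx); unfold f in Hf; rewrite sinh_0, sin_0 in Hf; lra.
Qed.

Lemma fC4_gap a x :
  let u := a + a * x in
  let v := a - a * x in
  2 * (fC4 a 1 - fC4 a x) =
    (sinh u - sin u) * (cosh v - cos v) + (cosh u - cos u) * (sinh v - sin v).
Proof.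
  intros u v; unfold fC4, u, v; rewrite Rmult_1_r.
  rewrite sinh_plus, cosh_plus, sinh_minus, cosh_minus,
          sin_plus, cos_plus, sin_minus, cos_minus.
  pose proof (cosh2_sinh2 a) as Hha; pose proof (cosh2_sinh2 (a * x)) as Hhx.
  pose proof (sin2_cos2 a) as Hta; pose proof (sin2_cos2 (a * x)) as Htx.
  unfold Rsqr in Hta, Htx.
  revert Hha Hhx Hta Htx.
  generalize (sinh a) (cosh a) (sin a) (cos a)
             (sinh (a * x)) (cosh (a * x)) (sin (a * x)) (cos (a * x)).
  intros; nsatz.
Qed.

Theorem corollaryC4 (a : R) (ha : 0 < a) :
  forall x : R, 0 <= x <= 1 -> fC4 a x <= fC4 a 1.
Proof.
  intros x Hx.
  pose proof (fC4_gap a x) as Hgap; simpl in Hgap.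
  set (u := a + a * x) in Hgap; set (v := a - a * x) in Hgap.
  assert (Hu : 0 <= u) by (unfold u; nra).
  assert (Hv : 0 <= v) by (unfold v; nra).
  pose proof (sin_le_sinh u Hu); pose proof (sin_le_sinh v Hv).
  pose proof (cos_le_cosh u); pose proof (cos_le_cosh v).
  assert (0 <= (sinh u - sin u) * (cosh v - cos v)) by (apply Rmult_le_pos; lra).
  assert (0 <= (cosh u - cos u) * (sinh v - sin v)) by (apply Rmult_le_pos; lra).
  lra.
Qed.
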